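(* Let $\Omega$ be a Cantor group with identity $e$ and let $T$ be a minimal translation of $\Omega$. For $f\in C(\Omega,\mathbb{R})$ let $F(\omega)=(f(T^n(\omega)))_{n\in\mathbb{Z}}$. Then for each $f\in C(\Omega,\mathbb{R})$, $\mathrm{hull}(F(e))$ is a Cantor group or a finite cyclic group, and the class of topological groups $\{\mathrm{hull}(F(e)) : f\in C(\Omega,\mathbb{R})\}$ coincides, up to isomorphism of topological groups, with the class of quotient groups $\Omega/N$ of $\Omega$ by closed subgroups $N$: every $\mathrm{hull}(F(e))$ is isomorphic to such a quotient, and every such quotient is isomorphic to $\mathrm{hull}(F(e))$ for some $f\in C(\Omega,\mathbb{R})$.
   Context: A Cantor group is a totally disconnected compact abelian topological group without isolated points. A translation of a topological group $\Omega$ is a map $T(\omega)=\omega\cdot\omega_0$ for some fixed $\omega_0\in\Omega$; it is minimal if $\{T^n(\omega):n\in\mathbb{Z}\}$ is dense in $\Omega$ for every $\omega$. $\sigma$ is the left shift on $\ell^\infty(\mathbb{Z})$ (sup norm), $(\sigma d)_n=d_{n+1}$, and $\mathrm{hull}(d)$ is the closure of $\{\sigma^k d:k\in\mathbb{Z}\}$. In this setting $F(e)$ is limit-periodic (a uniform limit of periodic sequences), and for a limit-periodic $d$, $\mathrm{hull}(d)$ carries a unique topological group structure with identity $d$ such that $k\mapsto\sigma^k(d)$ is a homomorphism; this is the group structure on $\mathrm{hull}(F(e))$. *)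

From HB Require Import structures.
From mathcomp Require Import all_boot all_order all_algebra.
From mathcomp Require Import all_classical all_reals all_analysis.
Set Implicit Arguments. Unset Strict Implicit. Unset Printing Implicit Defensive.
Import Order.TTheory GRing.Theory Num.Theory numFieldTopology.Exports numFieldNormedType.Exports.
Local Open Scope classical_set_scope.
Local Open Scope ring_scope.

(* l^oo(Z) with the sup-norm topology: sequences Z -> R with the topology of
   uniform convergence (on bounded sequences this is the sup-norm topology). *)
Notation seqZ R := ({uniform int -> R}) (only parsing).

(* sigma^k d, where (sigma d)_n = d_(n+1), so (sigma^k d)_n = d_(n+k). *)
Definition shiftz (R : realType) (k : int) (d : seqZ R) : seqZ R :=
  fun n => d (n + k).

Definition hull (R : realType) (d : seqZ R) : set (seqZ R) :=
  closure (range (fun k : int => shiftz k d)).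

(* F(w) = (f(T^n w))_n for the translation T w = w + w0 (additive notation). *)
Definition Fseq (R : realType) (Om : topologicalZmodType) (w0 : Om)
  (f : Om -> R) (w : Om) : seqZ R := fun n => f (w + w0 *~ n).

Definition cantor_group (Om : topologicalZmodType) : Prop :=
  [/\ compact [set: Om], totally_disconnected [set: Om]
    & forall x : Om, limit_point [set: Om] x].

Definition minimal_translation (Om : topologicalZmodType) (w0 : Om) : Prop :=
  forall w : Om, closure (range (fun n : int => w + w0 *~ n)) = [set: Om].

Definition closed_subgroup (Om : topologicalZmodType) (N : set Om) : Prop :=
  [/\ closed N, N 0 & forall x y, N x -> N y -> N (x - y)].

(* (mul, inv) is a topological group structure on hull(d) with identity d
   such that k |-> sigma^k d is a homomorphism (this structure is unique). *)
Definition hull_group (R : realType) (d : seqZ R)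
  (mul : seqZ R -> seqZ R -> seqZ R) (inv : seqZ R -> seqZ R) : Prop :=
  let H := hull d in
  [/\ (forall x y, H x -> H y -> H (mul x y)),
      (forall x, H x -> H (inv x)),
      (forall x y z, H x -> H y -> H z -> mul x (mul y z) = mul (mul x y) z),
      (forall x, H x -> mul d x = x /\ mul x d = x)
    & (forall x, H x -> mul (inv x) x = d /\ mul x (inv x) = d)] /\
  [/\ {within H `*` H, continuous (fun p : seqZ R * seqZ R => mul p.1 p.2)},
      {within H, continuous inv}
    & forall j k : int, mul (shiftz j d) (shiftz k d) = shiftz (j + k) d].

Definition hull_cantor (R : realType) (d : seqZ R)
  (mul : seqZ R -> seqZ R -> seqZ R) : Prop :=
  let H := hull d in
  [/\ forall x y, H x -> H y -> mul x y = mul y x,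
      compact H, totally_disconnected H
    & forall x, H x -> limit_point H x].

Definition hull_finite_cyclic (R : realType) (d : seqZ R)
  (mul : seqZ R -> seqZ R -> seqZ R) : Prop :=
  let H := hull d in
  finite_set H /\
  exists2 g, H g & forall x, H x -> exists k : nat, x = iter k (mul g) d.

(* Om / N is isomorphic, as a topological group, to (hull d, mul): there is a
   continuous open surjective homomorphism pi : Om -> hull d with kernel N
   (equivalently, the induced map Om/N -> hull d is an isomorphism of
   topological groups). *)
Definition quotient_iso (R : realType) (Om : topologicalZmodType) (N : set Om)
  (d : seqZ R) (mul : seqZ R -> seqZ R -> seqZ R) (pi : Om -> seqZ R) : Prop :=
  let H := hull d in
  [/\ (forall x, H (pi x)),
      (forall y, H y -> exists x, pi x = y),
      (forall a b, pi (a + b) = mul (pi a) (pi b)),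
      (forall x, pi x = d <-> N x)
    & continuous pi] /\
    (forall A : set Om, open A ->
        exists2 B : set (seqZ R), open B & pi @` A = B `&` H).

From HB Require Import structures.
From mathcomp Require Import all_boot all_order all_algebra.
From mathcomp Require Import all_classical all_reals all_analysis.
From mathcomp Require Import ring.
Import Order.TTheory GRing.Theory Num.Theory numFieldTopology.Exports numFieldNormedType.Exports.
Local Open Scope classical_set_scope.
Local Open Scope ring_scope.

(* The map F : Omega -> l^oo(Z) is continuous, since f is uniformly continuous
   on the compact group.  F a = F b says that f (a + .) and f (b + .) agree on
   the orbit of e, which is dense by minimality, hence everywhere; thus
   F a = F b iff a - b lies in the closed subgroup K = F^-1 (F e).  The image
   of F is hull (F e), as the orbit of e is dense, and F is a quotient map onto
   it by compactness, so hull (F e) is Omega / K.  Such a quotient is totally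
   disconnected, since clopen cosets of open subgroups containing K separate
   its points, and it is finite exactly when K is open, in which case it is
   cyclic, generated by F w0.
   Conversely, a closed subgroup N is the intersection of the open subgroups
   containing it, and every open subgroup is the closure of p Z w0 for the
   least p > 0 with p w0 in it.  The function which is 1/(p+1) at x for the
   least such p whose subgroup contains N but not x, and 0 on N, is continuous,
   N-invariant and vanishes exactly on N, so its kernel K is N. *)

Section quasi_component.
Context {T : topologicalType}.
Hypothesis cT : compact [set: T].

Definition quasi_component (x : T) := [set z : T | forall D, clopen D -> D x -> D z].

Lemma closed_quasi_component x : closed (quasi_component x).
Proof.
move=> z clz D cD Dx; apply: contrapT => nDz.
have [w [Qw nDw]] : quasi_component x `&` ~` D !=set0.
  by apply: clz; apply: open_nbhs_nbhs; split => //; exact: closed_openC cD.2.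
exact: nDw (Qw D cD Dx).
Qed.

(* By compactness, the clopen sets containing x cannot all meet ~` W. *)
Lemma quasi_component_clopen_sub {x W} : open W -> quasi_component x `<=` W ->
  exists D, [/\ clopen D, D x & D `<=` W].
Proof.
move=> oW QW; apply: contrapT => noD.
pose F := filter_from [set D | clopen D /\ D x] (fun D => D `&` ~` W).
have FF : Filter F.
  apply: filter_from_filter; first by exists setT; split => //; exact: clopenT.
  move=> D1 D2 [c1 x1] [c2 x2]; exists (D1 `&` D2); first by split; [exact: clopenI|].
  by move=> z [[? ?] ?].
have PF : ProperFilter F.
  apply: filter_from_proper => D [cD Dx]; apply: contrapT => nDW.
  apply: noD; exists D; split => // z Dz; apply: contrapT => nWz.
  by apply: nDW; exists z.
have [z [_ clz]] := @cT F PF (@filterT _ F _).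
have nWz : ~ W z.
  move=> Wz; have [w [[_ nWw] Ww]] : (setT `&` ~` W) `&` W !=set0.
    apply: clz; last exact: open_nbhs_nbhs.
    by exists setT => //; split => //; exact: clopenT.
  exact: nWw.
apply/nWz/QW => D cD Dx; apply: contrapT => nDz.
have [w [[Dw _] nDw]] : (D `&` ~` W) `&` ~` D !=set0.
  apply: clz; first by exists D.
  by apply: open_nbhs_nbhs; split => //; exact: closed_openC cD.2.
exact: nDw.
Qed.

Lemma separated_closedUl {A B : set T} : closed (A `|` B) -> separated A B -> closed A.
Proof.
move=> cAB [clAB _] z clAz; have [//|Bz] := cAB z (closureS (@subsetUl _ A B) clAz).
by exfalso; rewrite -[False]/(set0 z) -clAB.
Qed.

Hypothesis hT : hausdorff_space T.

Lemma closed_shrink {A B : set T} : closed A -> closed B -> A `&` B = set0 ->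
  exists V, [/\ open V, A `<=` V & closure V `&` B = set0].
Proof.
move=> cA cB AB0.
have AnB : set_nbhs A (~` B).
  apply/set_nbhsP; exists (~` B); split => //; first exact: closed_openC.
  by move=> z Az Bz; rewrite -[False]/(set0 z) -AB0.
have [V0 /set_nbhsP [V [oV AV VV0]] clV0] := compact_normal hT cT cA AnB.
exists V; split => //; apply/disjoints_subset => z /(closureS VV0).
exact: clV0.
Qed.

(* If the quasi-component splits into separated parts E false, containing x,
   and E true, shrink E false to an open V with closure disjoint from E true;
   a clopen D with x in D and D inside V `|` ~` closure V makes D `&` V a clopen
   set containing x but missing E true. *)
Lemma connected_quasi_component x : connected (quasi_component x).
Proof.
apply/connectedP => E [E0 QE sepE].
wlog Ex : E E0 QE sepE / E false x.
  move=> gen; have : quasi_component x x by [].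
  rewrite QE => -[Ex|Ex]; first exact: (gen E).
  apply: (gen (fun b => E (~~ b)) (fun b => E0 (~~ b))) => //=.
    by rewrite setUC.
  by rewrite separatedC.
have cQ := closed_quasi_component x; rewrite QE in cQ.
have cE0 := separated_closedUl cQ sepE.
have cE1 : closed (E true).
  apply: (separated_closedUl (B := E false)); first by rewrite setUC.
  by rewrite separatedC.
have [V [oV EV clVE]] := closed_shrink cE0 cE1 (separated_disjoint sepE).
have oW : open (V `|` ~` closure V).
  by apply: openU => //; exact/closed_openC/closed_closure.
have QW : quasi_component x `<=` V `|` ~` closure V.
  rewrite QE => z [Ez|Ez]; first by left; exact: EV.
  by right => clz; rewrite -[False]/(set0 z) -clVE.
have [D [[oD cD] Dx DVV]] := quasi_component_clopen_sub oW QW.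
have DV : D `&` closure V = D `&` V.
  apply/seteqP; split => z [Dz Vz]; split => //; last exact: subset_closure.
  by case: (DVV z Dz).
have cDV : clopen (D `&` V).
  by split; [exact: openI | rewrite -DV; exact: closedI (@closed_closure _ _)].
have [t Et] := E0 true.
have Qt : quasi_component x t by rewrite QE; right.
have [_ /subset_closure clVt] := Qt _ cDV (conj Dx (EV x Ex)).
by rewrite -[False]/(set0 t) -clVE.
Qed.

End quasi_component.

Lemma compact_totally_disconnected_zero_dimensional {T : topologicalType} :
  hausdorff_space T -> compact [set: T] -> totally_disconnected [set: T] ->
  zero_dimensional T.
Proof.
move=> hT cT tdT x y /eqP xy; apply: contrapT => nD.
have Qy : quasi_component x y.
  by move=> D cD Dx; apply: contrapT => nDy; apply: nD; exists D.
have : connected_component [set: T] x y.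
  by exists (quasi_component x) => //; split => //; exact: connected_quasi_component.
by rewrite tdT // => /esym.
Qed.

Section topological_group.
Context {Om : topologicalZmodType}.

Lemma near_add {a b : Om} {U} : nbhs (a + b) U -> \forall x \near a & y \near b, U (x + y).
Proof. exact: (@add_continuous Om (a, b) U). Qed.

Lemma near_sub {a b : Om} {U} : nbhs (a - b) U -> \forall x \near a & y \near b, U (x - y).
Proof. exact: (@sub_continuous Om (a, b) U). Qed.

Lemma addr_continuous (a : Om) : continuous (+%R a).
Proof.
move=> z; apply: (@continuous_comp _ _ _ (pair a) (fun p : Om * Om => p.1 + p.2)).
  by apply: cvg_pair; [exact: cvg_cst | exact: cvg_id].
exact: add_continuous.
Qed.

Lemma nbhs_translate {a : Om} (b : Om) {U} : nbhs a U -> nbhs b [set z | U (z + (a - b))].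
Proof.
rewrite -{1}(subrKC b a) => /near_add [[A B] /= [nA nB] AB].
by apply: filterS nA => z Az; apply: (AB (z, a - b)); split => //; exact: nbhs_singleton.
Qed.

Lemma closed0_hausdorff : closed [set 0 : Om] -> hausdorff_space Om.
Proof.
move=> cl0 p q pq; apply: contrapT => /eqP; rewrite -subr_eq0 => /eqP npq.
have /near_sub [[A B] /= [nA nB] AB] : nbhs (p - q) (~` [set 0 : Om]).
  by apply: open_nbhs_nbhs; split => //; exact: closed_openC.
have [z [Az Bz]] := pq A B nA nB.
by apply: (AB (z, z)); rewrite //= subrr.
Qed.

Definition is_subgroup (G : set Om) := G 0 /\ forall x y, G x -> G y -> G (x - y).

Section subgroup.
Context {G : set Om}.
Hypothesis sG : is_subgroup G.

Lemma subgroupN {x} : G x -> G (- x).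
Proof. by case: sG => G0 GB Gx; rewrite -sub0r; exact: GB. Qed.

Lemma subgroupD {x y} : G x -> G y -> G (x + y).
Proof. by case: sG => _ GB Gx /subgroupN Gy; rewrite -[y]opprK; exact: GB. Qed.

Lemma subgroupMz {x} k : G x -> G (x *~ k).
Proof.
case: sG => G0 _ Gx; have Gn n : G (x *+ n).
  by elim: n => [|n IHn]; rewrite ?mulr0n // mulrS; exact: subgroupD.
by case: k => n; rewrite ?NegzE ?mulrNz -pmulrn //; exact: subgroupN.
Qed.

Hypothesis nG : nbhs 0 G.

Lemma open_subgroup_nbhs {z} : G z -> nbhs z G.
Proof.
move=> Gz; apply: filterS (nbhs_translate z nG) => y /=.
by rewrite sub0r => /subgroupD/(_ Gz); rewrite subrK.
Qed.

Lemma open_subgroup_open : open G.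
Proof. by rewrite openE => z; exact: open_subgroup_nbhs. Qed.

Lemma open_subgroup_closed : closed G.
Proof.
rewrite -openC openE => z nGz; apply: filterS (nbhs_translate z nG) => y /= Gy Gy'.
by apply: nGz; have := subgroupD (subgroupN Gy) Gy'; rewrite sub0r opprB subrK.
Qed.

End subgroup.

Section compact_group.
Hypothesis cOm : compact [set: Om].

Lemma compact_near0 (P : Om -> Om -> Prop) :
  (forall z : Om, \forall x \near z & v \near (0 : Om), P x v) ->
  \forall v \near (0 : Om), forall x, P x v.
Proof.
move=> Pnear; have : \forall v \near (0 : Om), [set: Om] `<=` P^~ v.
  apply: ((compact_near_coveringP _).1 cOm Om (nbhs (0 : Om)) (fun v x => P x v)).
  by move=> z _; exact: Pnear.
by apply: filterS => v Pv x; exact: Pv.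
Qed.

Lemma compact_uniform_continuous {R : realType} {f : Om -> R} {e : R} :
  continuous f -> 0 < e -> \forall v \near (0 : Om), forall x, `|f (x + v) - f x| < e.
Proof.
move=> fc e0; apply: compact_near0 => z.
have e20 : 0 < e / 2 by rewrite divr_gt0.
have /near_add : nbhs (z + 0) [set y | `|f z - f y| < e / 2].
  by rewrite addr0; have /cvgrPdist_lt := fc z; apply.
case=> -[A B] /= [nA nB] AB; exists (A, B) => // -[x v] /= [Ax Bv].
have := AB (x, v) (conj Ax Bv); have := AB (x, 0) (conj Ax (nbhs_singleton nB)).
rewrite /= addr0 => h1 h2.
have -> : f (x + v) - f x = (f z - f x) - (f z - f (x + v)) by ring.
by rewrite (le_lt_trans (ler_normB _ _)) // [e]splitr ltrD.
Qed.

Hypothesis tdOm : totally_disconnected [set: Om].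

Lemma closed_point (x : Om) : closed [set x].
Proof. by rewrite -(@tdOm x I); exact: component_closed closedT. Qed.

Lemma compact_td_hausdorff : hausdorff_space Om.
Proof. exact/closed0_hausdorff/closed_point. Qed.

(* The stabilizer of a clopen neighbourhood D of 0 inside U is an open
   subgroup by compactness, and is contained in D. *)
Lemma nbhs0_open_subgroup {U} : nbhs 0 U ->
  exists G, [/\ is_subgroup G, nbhs 0 G & G `<=` U].
Proof.
move=> nU; have zdOm := compact_totally_disconnected_zero_dimensional
  compact_td_hausdorff cOm tdOm.
have [D [D0 [oD cD]] DU] := zero_dimensional_cvg compact_td_hausdorff zdOm cOm nU.
have DV : \forall v \near (0 : Om), forall w, D w -> D (w + v).
  apply: compact_near0 => z; have [Dz|nDz] := pselect (D z).
    have /near_add : nbhs (z + 0) D by rewrite addr0; exact: open_nbhs_nbhs.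
    by apply: filterS => -[x v] /= ? _.
  have : nbhs z (~` D) by apply: open_nbhs_nbhs; split => //; exact: closed_openC.
  move=> nD; exists (~` D, setT); first by split => //; exact: filterT.
  by move=> -[x v] /= [].
pose G := [set x | forall w, D (w + x) = D w].
exists G; split.
- split=> [w|x y Gx Gy w]; first by rewrite addr0.
  by rewrite addrA -(Gy (w + x - y)) subrK Gx.
- have := @opp_continuous Om 0 [set v | forall w, D w -> D (w + v)].
  rewrite oppr0 => /(_ DV) DVN.
  apply: filterS (filterI DV DVN) => v [Dv DvN] w; apply/propext; split; last exact: Dv.
  by move/DvN; rewrite addrK.
- by move=> x /(_ 0); rewrite add0r => Dx; apply: DU; rewrite Dx.
Qed.

Lemma open_subgroup_separate {N : set Om} {x} : closed N -> is_subgroup N -> ~ N x ->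
  exists W, [/\ is_subgroup W, nbhs 0 W, N `<=` W & ~ W x].
Proof.
move=> cN sN nNx.
have /(nbhs_translate 0) : nbhs x (~` N).
  by apply: open_nbhs_nbhs; split => //; exact: closed_openC.
rewrite subr0 => /nbhs0_open_subgroup [V [sV nV VN]].
exists [set z | exists2 n, N n & V (z - n)]; split.
- split; first by exists 0; [exact: sN.1 | rewrite subr0; exact: sV.1].
  move=> z1 z2 [n1 N1 V1] [n2 N2 V2]; exists (n1 - n2); first exact: sN.2.
  have -> : z1 - z2 - (n1 - n2) = (z1 - n1) - (z2 - n2).
    by rewrite !opprB addrACA [RHS]addrACA [- z2 + _]addrC.
  exact: sV.2.
- by apply: filterS nV => v Vv; exists 0; [exact: sN.1 | rewrite subr0].
- by move=> n Nn; exists n; rewrite // subrr; exact: sV.1.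
- move=> [n Nn /(subgroupN sV)]; rewrite opprB => /VN /=.
  by rewrite subrK.
Qed.

End compact_group.
End topological_group.

Lemma mulrz_divmod {V : zmodType} (x : V) (m : int) {p : nat} : (0 < p)%N ->
  exists2 r : nat, (r < p)%N & x *~ m = x *+ p *~ (m %/ p)%Z + x *+ r.
Proof.
move=> p0; have r0 : 0 <= (m %% p)%Z by rewrite modz_ge0 // eqz_nat -lt0n.
exists `|(m %% p)%Z|%N; first by rewrite -ltz_nat gez0_abs // ltz_pmod.
by rewrite {1}(divz_eq m p) mulrzDr mulrC mulrzA !pmulrn gez0_abs.
Qed.

Section monothetic.
Context {Om : topologicalZmodType} {w0 : Om}.
Hypothesis minT : minimal_translation w0.

Definition closed_multiples (x : Om) := closure (range (fun k : int => x *~ k)).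

Lemma orbit_dense {z : Om} {U} : nbhs z U -> exists k, U (w0 *~ k).
Proof.
move=> nU; have : closure (range (fun k : int => 0 + w0 *~ k)) z by rewrite minT.
by move=> /(_ U nU) [_ [[k _ <-] Uk]]; exists k; rewrite add0r in Uk.
Qed.

Hypotheses (lpOm : forall x : Om, limit_point [set: Om] x)
  (cl0 : closed [set 0 : Om]).

Section open_subgroup.
Context {W : set Om}.
Hypotheses (sW : is_subgroup W) (nW : nbhs (0 : Om) W).

Lemma open_subgroup_multiple : exists2 p : nat, (0 < p)%N & W (w0 *+ p).
Proof.
have [y [y0 _ Wy]] := lpOm 0 W nW.
have n0 : nbhs y (~` [set 0 : Om]).
  by apply: open_nbhs_nbhs; split; [exact: closed_openC | move=> /= /eqP; apply/negP].
have [k [Wk k0]] := orbit_dense (filterI (open_subgroup_nbhs sW nW Wy) n0).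
have k0' : k != 0 by apply: contra_notN k0 => /eqP ->; rewrite mulr0z.
exists (absz (k * k)); first by rewrite absz_gt0 mulf_neq0.
by rewrite pmulrn gez0_abs -?expr2 ?sqr_ge0 // expr2 mulrzA; exact: subgroupMz.
Qed.

Lemma open_subgroup_cosets : exists2 p : nat, (0 < p)%N &
  forall a, exists2 j : nat, (j < p)%N & W (a - w0 *+ j).
Proof.
have [p p0 Wp] := open_subgroup_multiple; exists p => // a.
have [m Wm] := orbit_dense (nbhs_translate a nW).
have [r rp em] := mulrz_divmod w0 m p0; rewrite em in Wm; exists r => //.
have := sW.2 _ _ (subgroupMz sW (m %/ p)%Z Wp) Wm.
by rewrite !opprD oppr0 opprK add0r addrA addNKr addrC.
Qed.

Lemma open_subgroup_multiples {p} : (0 < p)%N -> W (w0 *+ p) ->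
  (forall q, (0 < q)%N -> (q < p)%N -> ~ W (w0 *+ q)) ->
  W = closed_multiples (w0 *+ p).
Proof.
move=> p0 Wp pmin; apply/seteqP; split; last first.
  rewrite [X in _ `<=` X]((closure_id _).1 (open_subgroup_closed sW nW)).
  by apply: closureS => _ [k _ <-]; exact: subgroupMz.
move=> z Wz U nU.
have [m [Um Wm]] := orbit_dense (filterI nU (open_subgroup_nbhs sW nW Wz)).
have [r rp em] := mulrz_divmod w0 m p0; rewrite em in Um Wm.
have r0 : r = 0%N.
  apply: contrapT => /eqP; rewrite -lt0n => r0; apply: (pmin r r0 rp).
  by have := sW.2 _ _ Wm (subgroupMz sW (m %/ p)%Z Wp); rewrite addrC addKr.
by exists (w0 *+ p *~ (m %/ p)%Z); split; [exists (m %/ p)%Z | move: Um; rewrite r0 addr0].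
Qed.

End open_subgroup.
End monothetic.

Lemma seqZ_hausdorff (R : realType) : hausdorff_space (seqZ R).
Proof.
move=> p q; rewrite -closeEnbhs (hausdorrf_close_eq_in _ _ (@Rhausdorff R)) => pq.
by apply/funext => n; apply: pq; rewrite inE.
Qed.

Lemma seqZ_closed_finite {R : realType} {A : set (seqZ R)} : finite_set A -> closed A.
Proof. exact: accessible_finite_set_closed.1 (hausdorff_accessible (@seqZ_hausdorff R)) A. Qed.

Section hull.
Context {R : realType} {Om : topologicalZmodType} (w0 : Om) (f : Om -> R).
Hypotheses (cOm : compact [set: Om]) (minT : minimal_translation w0) (fc : continuous f).

Local Notation pi := (Fseq w0 f).
Local Notation d := (Fseq w0 f 0).

Lemma Fseq_continuous : continuous pi.
Proof.
move=> x P /uniform_nbhs [E [/= [e e0 eE] EP]].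
have /(nbhs_translate x) := compact_uniform_continuous cOm fc e0.
apply: filterS => z /= fz; apply: EP => n _; apply: eE; rewrite /ball /= distrC.
by have := fz (x + w0 *~ n); rewrite /Fseq sub0r addrAC [x + (_ - _)]addrC subrK.
Qed.

Lemma Fseq_shift k w : shiftz k (pi w) = pi (w + w0 *~ k).
Proof. by apply/funext => n; rewrite /shiftz /Fseq mulrzDr addrA addrAC. Qed.

(* The set of c with f (a + c) = f (b + c) is closed and contains the dense orbit of 0. *)
Lemma Fseq_eq_addr {a b} c : pi a = pi b -> pi (a + c) = pi (b + c).
Proof.
move=> pab; apply/funext => n; rewrite /Fseq -!addrA; move: (c + _) => {}c.
pose g z := f (a + z) - f (b + z).
have cg : continuous g.
  by move=> z; apply: cvgB; apply: continuous_comp (fc _); exact: addr_continuous.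
have cS : closed (g @^-1` [set 0]).
  by apply: preimage_closed; [move=> z _; exact: cg | exact: closed_eq].
have : closure (range (fun k : int => 0 + w0 *~ k)) `<=` g @^-1` [set 0].
  rewrite [X in _ `<=` X]((closure_id _).1 cS); apply: closureS => _ [k _ <-].
  by have := congr1 (fun s => s k) pab; rewrite /g /= /Fseq add0r => ->; exact: subrr.
by rewrite minT => /(_ c I) /subr0_eq.
Qed.

Lemma hullE : hull d = range pi.
Proof.
have cpi : compact (range pi).
  exact: continuous_compact (continuous_subspaceT Fseq_continuous) cOm.
apply/seteqP; split.
  rewrite /hull [X in _ `<=` X]((closure_id _).1 (compact_closed (@seqZ_hausdorff R) cpi)).
  by apply: closureS => _ [k _ <-]; exists (w0 *~ k) => //; rewrite Fseq_shift add0r.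
move=> _ [w _ <-] B nB; have [k Bk] := orbit_dense minT (Fseq_continuous _ _ nB).
by exists (pi (w0 *~ k)); split => //; exists k => //; rewrite Fseq_shift add0r.
Qed.

Lemma hull_Fseq a : hull d (pi a).
Proof. by rewrite hullE; exists a. Qed.

(* Some preimage of x under F, and 0 when x is not in the hull. *)
Definition hull_lift (x : seqZ R) : Om := xget 0 [set a | pi a = x].

Lemma hull_liftK {x} : hull d x -> pi (hull_lift x) = x.
Proof.
rewrite hullE => -[a _ <-]; have ex : exists b, pi b = pi a by exists a.
exact: (xgetPex 0 ex).
Qed.

Definition hull_add (x y : seqZ R) : seqZ R := pi (hull_lift x + hull_lift y).
Definition hull_opp (x : seqZ R) : seqZ R := pi (- hull_lift x).

Lemma hull_addE a b : hull_add (pi a) (pi b) = pi (a + b).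
Proof.
rewrite /hull_add (Fseq_eq_addr _ (hull_liftK (hull_Fseq a))) addrC.
by rewrite (Fseq_eq_addr _ (hull_liftK (hull_Fseq b))) addrC.
Qed.

Lemma hull_oppE a : hull_opp (pi a) = pi (- a).
Proof.
have := Fseq_eq_addr (- hull_lift (pi a) - a) (hull_liftK (hull_Fseq a)).
by rewrite addrA subrr add0r addrC subrK.
Qed.

Definition Fkernel := [set x | pi x = d].

Lemma Fseq_eqE a b : pi a = pi b <-> Fkernel (a - b).
Proof.
split => [pab|Kab]; first by rewrite /Fkernel /= (Fseq_eq_addr (- b) pab) subrr.
by have := Fseq_eq_addr b Kab; rewrite subrK add0r.
Qed.

Lemma Fkernel_closed_subgroup : closed_subgroup Fkernel.
Proof.
split => //.
- rewrite (_ : Fkernel = pi @^-1` [set d]) //.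
  apply: preimage_closed; last exact: seqZ_closed_finite (finite_set1 d).
  by move=> x _; exact: Fseq_continuous.
- by move=> x y Kx Ky; apply/(Fseq_eqE x y); rewrite Kx Ky.
Qed.

(* The saturation pi @^-1` (pi @` A) of an open set is open, and pi maps its
   closed, hence compact, complement onto a compact set. *)
Lemma Fseq_open {A} : open A -> exists2 B, open B & pi @` A = B `&` hull d.
Proof.
move=> oA; pose A' := pi @^-1` (pi @` A).
have oA' : open A'.
  rewrite openE => z [a Aa paz]; apply: filterS (nbhs_translate z (open_nbhs_nbhs (conj oA Aa))).
  move=> y /= Ay; exists (y + (a - z)) => //; apply/(Fseq_eqE _ y).
  by rewrite [y + _]addrC addrK; apply/(Fseq_eqE a z).
have cA' : compact (pi @` (~` A')).
  apply: continuous_compact (continuous_subspaceT Fseq_continuous) _.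
  exact: subclosed_compact (open_closedC oA') cOm _.
exists (~` (pi @` (~` A'))); first exact/closed_openC/(compact_closed (@seqZ_hausdorff R)).
apply/seteqP; split => [_ [a Aa <-]|x [nx]].
  split; last exact: hull_Fseq.
  by case=> z nA'z pz; apply: nA'z; exists a.
rewrite hullE => -[z _ pz]; have [[a Aa paz]|nA'z] := pselect (A' z).
  by exists a => //; rewrite paz.
by case: nx; exists z.
Qed.

Lemma Fseq_nbhs {a A} : nbhs a A ->
  exists2 B, nbhs (pi a) B & forall y, B y -> hull d y -> exists2 a', A a' & pi a' = y.
Proof.
rewrite nbhsE => -[A0 [oA0 A0a] A0A]; have [B oB eB] := Fseq_open oA0.
have [Bpa _] : (B `&` hull d) (pi a) by rewrite -eB; exists a.
exists B; first exact: open_nbhs_nbhs.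
move=> y By Hy; have : (B `&` hull d) y by [].
by rewrite -eB => -[a' A0a' <-]; exists a' => //; exact: A0A.
Qed.

Lemma hull_within_continuous (g : seqZ R -> seqZ R) (h : Om -> Om) :
  continuous h -> (forall a, g (pi a) = pi (h a)) -> {within hull d, continuous g}.
Proof.
move=> hc gE x; rewrite /continuous_at.
case: (nbhs_subspaceP (hull d) x) => [Hx|_]; last by move=> V /nbhs_singleton Vx q ->.
have [a _ <-] : range pi x by rewrite -hullE.
move=> V; rewrite /from_subspace /= gE => /Fseq_continuous/hc/Fseq_nbhs [B nB hB].
by apply: filterS nB => y By Hy; have [a' Va <-] := hB _ By Hy; rewrite /= gE.
Qed.

Lemma hull_within_continuous2 (g : seqZ R -> seqZ R -> seqZ R) (h : Om -> Om -> Om) :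
  continuous (fun p : Om * Om => h p.1 p.2) -> (forall a b, g (pi a) (pi b) = pi (h a b)) ->
  {within hull d `*` hull d, continuous (fun p => g p.1 p.2)}.
Proof.
move=> hc gE [x y]; rewrite /continuous_at.
case: (nbhs_subspaceP (hull d `*` hull d) (x, y)) => [|_]; last first.
  by move=> V /nbhs_singleton Vx q ->.
case=> Hx Hy; have [a _ <-] : range pi x by rewrite -hullE.
have [b _ <-] : range pi y by rewrite -hullE.
move=> V; rewrite /from_subspace /= gE.
move=> /Fseq_continuous/(hc (a, b)) [[A B] /= [/Fseq_nbhs [A' nA' hA] /Fseq_nbhs [B' nB' hB] AB]].
exists (A', B') => //= -[x' y'] /= [A'x B'y] [Hx' Hy'].
have [a' Aa <-] := hA _ A'x Hx'; have [b' Bb <-] := hB _ B'y Hy'.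
by rewrite /= gE; exact: (AB (a', b')).
Qed.

Lemma hull_group_Fseq : hull_group d hull_add hull_opp.
Proof.
split; split.
- by move=> x y _ _; exact: hull_Fseq.
- by move=> x _; exact: hull_Fseq.
- by move=> x y z; rewrite hullE => -[a _ <-] [b _ <-] [c _ <-]; rewrite !hull_addE addrA.
- by move=> x; rewrite hullE => -[a _ <-]; rewrite !hull_addE add0r addr0.
- by move=> x; rewrite hullE => -[a _ <-]; rewrite hull_oppE !hull_addE addNr subrr.
- exact: hull_within_continuous2 add_continuous hull_addE.
- exact: hull_within_continuous opp_continuous hull_oppE.
- by move=> j k; rewrite !Fseq_shift hull_addE !add0r mulrzDr.
Qed.

Lemma quotient_iso_Fseq : quotient_iso Fkernel d hull_add pi.
Proof.
split; last by move=> A /Fseq_open.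
split => //; first exact: hull_Fseq.
- by move=> y; rewrite hullE => -[a _ <-]; exists a.
- by move=> a b; rewrite hull_addE.
- exact: Fseq_continuous.
Qed.

Hypothesis tdOm : totally_disconnected [set: Om].

Lemma hull_totally_disconnected : totally_disconnected (hull d).
Proof.
move=> x Hx; apply/seteqP; split=> [y [C [Cx CH cC] Cy]|_ ->]; last first.
  exact: connected_component_refl.
apply: contrapT => yx.
have [a _ pa] : range pi x by rewrite -hullE.
have [b _ pb] : range pi y by rewrite -hullE; exact: CH.
have [cK K0 KB] := Fkernel_closed_subgroup.
have /(open_subgroup_separate cOm tdOm cK (conj K0 KB)) [W [sW nW KW nWba]] : ~ Fkernel (b - a).
  by move/(Fseq_eqE b a); rewrite pa pb; exact: yx.
pose S := +%R (- a) @^-1` W.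
have oS : open S.
  exact: (continuousP _).1 (addr_continuous (- a)) _ (open_subgroup_open sW nW).
have cS : closed S.
  by apply: preimage_closed (open_subgroup_closed sW nW) => z _; exact: addr_continuous.
have Ssat z z' : S z -> pi z' = pi z -> S z'.
  move=> Sz /(Fseq_eqE z' z) /KW Wz; have := subgroupD sW Sz Wz.
  by rewrite /S /= [z' - z]addrC addrA addrK.
have cpS : closed (pi @` S).
  apply: compact_closed (@seqZ_hausdorff R) _.
  exact: continuous_compact (continuous_subspaceT Fseq_continuous) (subclosed_compact cS cOm _).
have [B oB eB] := Fseq_open oS.
have CS : C `&` pi @` S = C.
  apply: cC; last by exists (pi @` S).
    by exists x; split => //; exists a => //; rewrite /S /= addNr; exact: sW.1.
  by exists B => //; rewrite eB setIA setIAC (setIidl CH).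
have [s Ss ps] : (pi @` S) y by move: Cy; rewrite -CS => -[].
have := Ssat s b Ss (etrans pb (esym ps)).
by rewrite /S /= addrC; exact: nWba.
Qed.

Hypothesis lpOm : forall x : Om, limit_point [set: Om] x.

Lemma Fkernel_nbhs_finite : nbhs 0 Fkernel ->
  exists p : nat, forall x, hull d x -> exists2 j : nat, (j < p)%N & x = pi (w0 *+ j).
Proof.
have [cK K0 KB] := Fkernel_closed_subgroup.
move=> /(open_subgroup_cosets minT lpOm (closed_point tdOm 0) (conj K0 KB)) [p _ hp].
exists p => x; rewrite hullE => -[a _ <-]; have [j jp Kj] := hp a.
by exists j => //; apply/Fseq_eqE.
Qed.

Lemma hull_finite_Fkernel_nbhs : finite_set (hull d) -> nbhs 0 Fkernel.
Proof.
move=> fin; have /closed_openC oP := seqZ_closed_finite (finite_setIl (~` [set d]) fin).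
have /open_nbhs_nbhs : open_nbhs 0 (pi @^-1` (~` (hull d `&` ~` [set d]))).
  split; first exact: (continuousP _).1 Fseq_continuous _ oP.
  by case=> _; apply.
by apply: filterS => z /= nz; apply: contrapT => Kz; apply: nz; split; [exact: hull_Fseq|].
Qed.

Lemma hull_limit_point x : ~ finite_set (hull d) -> hull d x -> limit_point (hull d) x.
Proof.
move=> nfin Hx U nU; apply: contrapT => nUx.
have Ux y : hull d y -> U y -> y = x.
  by move=> Hy Uy; apply: contrapT => /eqP yx; apply: nUx; exists y.
have [a _ pa] : range pi x by rewrite -hullE.
have nK : nbhs 0 Fkernel.
  rewrite -pa in nU; apply: filterS (nbhs_translate 0 (Fseq_continuous _ _ nU)) => z /=.
  rewrite subr0 => Uz; have := (Fseq_eqE (z + a) a).1; rewrite addrK; apply.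
  by rewrite pa; apply: Ux Uz; exact: hull_Fseq.
apply: nfin; have [p hp] := Fkernel_nbhs_finite nK.
apply: (sub_finite_set _ (finite_image (fun j => pi (w0 *+ j)) (finite_II p))).
by move=> y /hp [j jp ->]; exists j.
Qed.

Lemma hull_iter_add k : iter k (hull_add (pi w0)) d = pi (w0 *+ k).
Proof. by elim: k => [|k IHk]; rewrite ?mulr0n // iterS IHk hull_addE mulrS. Qed.

Lemma hull_cantor_or_cyclic : hull_cantor d hull_add \/ hull_finite_cyclic d hull_add.
Proof.
have [fin|nfin] := pselect (finite_set (hull d)).
  right; split => //; exists (pi w0); first exact: hull_Fseq.
  have [p hp] := Fkernel_nbhs_finite (hull_finite_Fkernel_nbhs fin).
  by move=> x /hp [j _ ->]; exists j; rewrite hull_iter_add.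
left; split.
- by move=> x y; rewrite hullE => -[a _ <-] [b _ <-]; rewrite !hull_addE addrC.
- by rewrite hullE; exact: continuous_compact (continuous_subspaceT Fseq_continuous) cOm.
- exact: hull_totally_disconnected.
- by move=> x; exact: hull_limit_point.
Qed.

End hull.

Lemma exists_least_nat {P : nat -> Prop} : (exists n, P n) ->
  exists n, P n /\ forall m, (m < n)%N -> ~ P m.
Proof.
move=> [n Pn].
have [m /asboolP Pm mmin] := ex_minnP (ex_intro (fun n => `[< P n >]) n (asboolT Pn)).
by exists m; split => // k km /asboolP /mmin; rewrite leqNgt km.
Qed.

Section inv_least.
Context {R : realType}.

Definition inv_least (P : nat -> Prop) : R :=
  if pselect (exists n, P n) then
    (xget 0%N [set n | P n /\ forall m, (m < n)%N -> ~ P m]).+1%:R^-1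
  else 0.

Lemma inv_leastE {P n} : P n -> (forall m, (m < n)%N -> ~ P m) -> inv_least P = n.+1%:R^-1.
Proof.
move=> Pn nmin; rewrite /inv_least; case: pselect => [ex /=|]; last by case; exists n.
have := xgetPex 0%N (exists_least_nat ex); set m := xget _ _ => -[Pm mmin].
suff -> : m = n by [].
apply/eqP; rewrite eqn_leq; apply/andP; split; rewrite leqNgt; apply/negP.
  by move/mmin; apply.
by move/nmin; apply.
Qed.

Lemma inv_least_eq0 P : inv_least P = 0 <-> forall n, ~ P n.
Proof.
split=> [P0 n Pn|noP]; last first.
  by rewrite /inv_least; case: pselect => // ex; exfalso; have [n /noP] := ex.
have [m [Pm mmin]] := exists_least_nat (ex_intro _ n Pn).
by move: P0; rewrite (inv_leastE Pm mmin) => /eqP; rewrite invr_eq0 pnatr_eq0.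
Qed.

Lemma inv_least_eq {P Q m} : P m -> (forall n, (n <= m)%N -> P n <-> Q n) ->
  inv_least P = inv_least Q.
Proof.
move=> Pm PQ; have [k [Pk kmin]] := exists_least_nat (ex_intro _ m Pm).
have km : (k <= m)%N by rewrite leqNgt; apply/negP => /kmin.
have kminQ n : (n < k)%N -> ~ Q n.
  by move=> nk /PQ-/(_ (ltnW (leq_trans nk km))) /(kmin _ nk).
by rewrite (inv_leastE Pk kmin) (inv_leastE ((PQ _ km).1 Pk) kminQ).
Qed.

Lemma inv_least_ge {P M} : (forall m, (m < M)%N -> ~ P m) ->
  inv_least P = 0 \/ exists2 n, (M <= n)%N & inv_least P = n.+1%:R^-1.
Proof.
move=> Pmin; have [ex|noP] := pselect (exists n, P n); last first.
  by left; apply/inv_least_eq0 => n Pn; apply: noP; exists n.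
have [n [Pn nmin]] := exists_least_nat ex; right; exists n; last exact: inv_leastE.
by rewrite leqNgt; apply/negP => /Pmin.
Qed.

End inv_least.

Section separating_function.
Context {R : realType} {Om : topologicalZmodType} (w0 : Om) (N : set Om).

Local Notation G p := (closed_multiples (w0 *+ p)).

(* Every open subgroup containing N is closed_multiples (w0 *+ p) for some
   admissible p, by open_subgroup_multiples. *)
Definition admissible (p : nat) := [/\ is_subgroup (G p), nbhs 0 (G p) & N `<=` G p].
Definition separating (x : Om) (p : nat) := admissible p /\ ~ G p x.
Definition sep_fun (x : Om) : R := inv_least (separating x).

Lemma sep_fun0 : sep_fun 0 = 0.
Proof. by apply/inv_least_eq0 => p [[sG _ _]]; apply; exact: sG.1. Qed.

Lemma near_separating x M :
  \forall y \near x, forall q, (q <= M)%N -> (separating y q <-> separating x q).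
Proof.
have near_q q : \forall y \near x, separating y q <-> separating x q.
  have [[sG nG NG]|nadm] := pselect (admissible q); last by apply: nearW => y; split=> -[].
  suff : \forall y \near x, G q y <-> G q x.
    by apply: filterS => y GyGx; rewrite /separating GyGx.
  have [Gx|nGx] := pselect (G q x).
    by apply: filterS (open_subgroup_nbhs sG nG Gx) => y Gy.
  have : nbhs x (~` G q).
    by apply: open_nbhs_nbhs; split => //; exact/closed_openC/open_subgroup_closed.
  by apply: filterS => y nGy.
have : \forall y \near x, forall i : 'I_M.+1, separating y i <-> separating x i.
  by apply: filter_forall => i; exact: near_q.
by apply: filterS => y agree q; rewrite -ltnS => qM; exact: (agree (Ordinal qM)).
Qed.

Lemma sep_fun_continuous : continuous sep_fun.
Proof.
move=> x; apply/cvgrPdist_lt => e e0.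
have [/exists_least_nat [m [sxm mmin]]|nosep] := pselect (exists p, separating x p).
  apply: filterS (near_separating x m) => y agree.
  by rewrite /sep_fun (inv_least_eq sxm (fun n nm => iff_sym (agree n nm))) subrr normr0.
have fx0 : sep_fun x = 0 by apply/inv_least_eq0 => n sxn; apply: nosep; exists n.
case: (near_infty_natSinv_lt (PosNum e0)) => M _ hM.
apply: filterS (near_separating x M) => y agree; rewrite fx0 sub0r normrN.
have noy q : (q < M.+1)%N -> ~ separating y q.
  by rewrite ltnS => qM /(agree q qM) sxq; apply: nosep; exists q.
rewrite /sep_fun; have [->|[n Mn ->]] := @inv_least_ge R _ _ noy.
  by rewrite normr0.
by rewrite ger0_norm ?invr_ge0 ?ler0n //; apply: hM; rewrite /= ltnW.
Qed.

Lemma sep_fun_addN x n : N n -> sep_fun (x + n) = sep_fun x.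
Proof.
move=> Nn; rewrite /sep_fun (_ : separating (x + n) = separating x) //.
apply/funext => p; apply/propext; split => -[[sG nG NG] nGx]; split => // Gx; apply: nGx.
  by have := subgroupD sG Gx (NG _ Nn).
by have := subgroupD sG Gx (subgroupN sG (NG _ Nn)); rewrite addrK.
Qed.

Hypotheses (cN : closed_subgroup N) (cOm : compact [set: Om])
  (tdOm : totally_disconnected [set: Om]) (minT : minimal_translation w0)
  (lpOm : forall x : Om, limit_point [set: Om] x).

Lemma separating_exists x : ~ N x -> exists p, separating x p.
Proof.
have [clN N0 NB] := cN.
move=> /(open_subgroup_separate cOm tdOm clN (conj N0 NB)) [W [sW nW NW nWx]].
have [k k0 Wk] := open_subgroup_multiple minT lpOm (closed_point tdOm 0) sW nW.
have [p [[p0 Wp] pmin]] :=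
  exists_least_nat (ex_intro (fun p => (0 < p)%N /\ W (w0 *+ p)) k (conj k0 Wk)).
have WG := open_subgroup_multiples minT sW nW p0 Wp (fun q q0 qp Wq => pmin q qp (conj q0 Wq)).
by exists p; rewrite /separating /admissible -WG.
Qed.

Lemma Fkernel_sep_fun : Fkernel w0 sep_fun = N.
Proof.
apply/seteqP; split => x.
  move/(congr1 (fun s => s 0)); rewrite /Fseq !mulr0z !addr0 sep_fun0 => /inv_least_eq0 nosep.
  by apply: contrapT => /separating_exists [p /nosep].
by move=> Nx; apply/funext => n; rewrite /Fseq add0r [x + _]addrC sep_fun_addN.
Qed.

End separating_function.

Theorem theorem4p4 (R : realType) (Om : topologicalZmodType) (w0 : Om) :
  cantor_group Om -> minimal_translation w0 ->
  (forall f : Om -> R, continuous f ->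
     exists mul inv, hull_group (Fseq w0 f 0) mul inv /\
       (hull_cantor (Fseq w0 f 0) mul \/ hull_finite_cyclic (Fseq w0 f 0) mul) /\
       exists N : set Om, closed_subgroup N /\ exists pi, quotient_iso N (Fseq w0 f 0) mul pi) /\
  (forall N : set Om, closed_subgroup N ->
     exists f : Om -> R, continuous f /\
       exists mul inv, hull_group (Fseq w0 f 0) mul inv /\
       exists pi, quotient_iso N (Fseq w0 f 0) mul pi).
Proof.
move=> [cOm tdOm lpOm] minT; split=> [f fc|N cN].
  exists (hull_add w0 f), (hull_opp w0 f); split; first exact: hull_group_Fseq.
  split; first exact: hull_cantor_or_cyclic.
  exists (Fkernel w0 f); split; first exact: Fkernel_closed_subgroup.
  by exists (Fseq w0 f); exact: quotient_iso_Fseq.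
pose f : Om -> R := sep_fun w0 N.
have fc : continuous f := sep_fun_continuous w0 N.
exists f; split => //; exists (hull_add w0 f), (hull_opp w0 f); split.
  exact: hull_group_Fseq.
exists (Fseq w0 f); have := quotient_iso_Fseq w0 f cOm minT fc.
by rewrite (Fkernel_sep_fun w0 N cN cOm tdOm minT lpOm).
Qed.
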